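(* For every integer $N$ there exists a graph $G$ with $\pi_T(G)-\pi_{T_w}(G)\ge N$; that is, the difference between $\pi_{T_w}$ and $\pi_T$ can be arbitrarily large.
   Context: Graphs are finite and simple. A sequence is nonrepetitive if no block of consecutive terms has the form $r_1\dots r_nr_1\dots r_n$ with $n\ge1$. A weak total Thue colouring of $G$ is a colouring of $V(G)\cup E(G)$ such that for every path $v_1,e_1,v_2,\dots,e_{k-1},v_k$ the sequence of colours of $v_1,e_1,\dots,v_k$ is nonrepetitive; $\pi_{T_w}(G)$ is the minimum number of colours in such a colouring. A (strong) total Thue colouring is a weak total Thue colouring in which additionally the colour sequence of the vertices of every path and the colour sequence of the edges of every path are nonrepetitive; $\pi_T(G)$ is the minimum number of colours in such a colouring. *)

From mathcomp Require Import all_boot.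
From mathcomp Require Import boolp.

Set Implicit Arguments.
Unset Strict Implicit.
Unset Printing Implicit Defensive.

(* A finite simple graph on vertex set 'I_n is a symmetric irreflexive
   relation e : rel 'I_n.  Colours are natural numbers; a colouring with
   k colours uses colours < k. *)

Definition nonrepetitive (s : seq nat) : Prop :=
  forall a r c : seq nat, s = a ++ r ++ r ++ c -> r = [::].

Section Colourings.
Variable T : finType.
Variable e : rel T.

Definition is_gpath (v : T) (s : seq T) : bool := uniq (v :: s) && path e v s.

Fixpoint total_seq (cv : T -> nat) (ce : T -> T -> nat) (v : T) (s : seq T)
  : seq nat :=
  match s with
  | [::] => [:: cv v]
  | w :: s' => cv v :: ce v w :: total_seq cv ce w s'
  end.

Definition vertex_seq (cv : T -> nat) (v : T) (s : seq T) : seq nat :=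
  map cv (v :: s).
Definition edge_seq (ce : T -> T -> nat) (v : T) (s : seq T) : seq nat :=
  pairmap ce v s.

(* (cv, ce) is a total colouring with k colours: ce is a colouring of the
   (unordered) edges, i.e. symmetric on edges; all colours are < k. *)
Definition total_colouring (k : nat) (cv : T -> nat) (ce : T -> T -> nat)
  : Prop :=
  (forall x, cv x < k) /\
  (forall x y, e x y -> ce x y = ce y x /\ ce x y < k).

Definition weak_total_thue (k : nat) (cv : T -> nat) (ce : T -> T -> nat)
  : Prop :=
  total_colouring k cv ce /\
  forall v s, is_gpath v s -> nonrepetitive (total_seq cv ce v s).

Definition strong_total_thue (k : nat) (cv : T -> nat) (ce : T -> T -> nat)
  : Prop :=
  weak_total_thue k cv ce /\
  forall v s, is_gpath v s ->
    nonrepetitive (vertex_seq cv v s) /\ nonrepetitive (edge_seq ce v s).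

End Colourings.

(* Least natural number satisfying P (0 if there is none). *)
Lemma ex_asbool_nat (P : nat -> Prop) :
  (exists k, P k) -> exists k, `[< P k >].
Proof. by move=> [k Hk]; exists k; apply/asboolP. Qed.

Definition min_nat (P : nat -> Prop) : nat :=
  match pselect (exists k, P k) with
  | left h => ex_minn (ex_asbool_nat h)
  | right _ => 0
  end.

Definition pi_Tw (T : finType) (e : rel T) : nat :=
  min_nat (fun k => exists cv ce, weak_total_thue e k cv ce).
Definition pi_T (T : finType) (e : rel T) : nat :=
  min_nat (fun k => exists cv ce, strong_total_thue e k cv ce).

From mathcomp Require Import all_boot.
From mathcomp Require Import boolp.
From mathcomp Require Import zify.

(* In the star K_{1,m} every path has at most three vertices, so colouring
   the centre 0, the leaves 1 and every edge 2 is a weak total Thue colouring.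
   In a strong one, the edge sequence of a path y, x, z is the pair of colours
   of the edges xy and xz, so all edges at x get distinct colours; hence pi_T
   is at least the maximum degree, here m. *)

(* A decidable form of [nonrepetitive]: on an explicit short sequence it
   computes to a conjunction of disequalities between its entries. *)
Definition squarefree (s : seq nat) : bool :=
  all (fun i => all (fun l => take l.+1 (drop i s) != take l.+1 (drop (i + l.+1) s))
                    (iota 0 (size s - i)./2))
      (iota 0 (size s)).

Lemma squarefree_nonrepetitive (s : seq nat) : squarefree s -> nonrepetitive s.
Proof.
move=> /allP sqf a r c Es; apply/eqP/negPn/negP => r_nil.
have r_gt0 : 0 < size r by rewrite lt0n size_eq0.
have size_s : size s = size a + (size r + (size r + size c)) by rewrite Es !size_cat.
have /sqf/allP/(_ (size r).-1) : size a \in iota 0 (size s).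
  by rewrite mem_iota size_s; lia.
have -> : (size r).-1 \in iota 0 (size s - size a)./2.
  by rewrite mem_iota size_s; lia.
rewrite prednK // Es addnC -drop_drop !drop_size_cat // !take_size_cat //.
by rewrite eqxx => /(_ isT).
Qed.

Lemma nonrepetitive_pair (a b : nat) : nonrepetitive [:: a; b] -> a != b.
Proof.
by move=> nr; apply/eqP=> eq_ab; have := nr [::] [:: a] [::]; rewrite eq_ab => /(_ erefl).
Qed.

Lemma min_nat_le (P : nat -> Prop) (k : nat) : P k -> min_nat P <= k.
Proof.
move=> Pk; rewrite /min_nat; case: pselect => [h|//].
by case: ex_minnP => j _ /(_ k (asboolT Pk)).
Qed.

Lemma min_nat_ge (P : nat -> Prop) (b : nat) :
  (exists k, P k) -> (forall k, P k -> b <= k) -> b <= min_nat P.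
Proof.
move=> Pex Pb; rewrite /min_nat; case: pselect => [h|//].
by case: ex_minnP => j /asboolP Pj _; apply: Pb.
Qed.

Lemma strong_total_thue_degree_le {T : finType} {e : rel T} {k : nat}
    {cv : T -> nat} {ce : T -> T -> nat} (x : T) :
  symmetric e -> irreflexive e -> strong_total_thue e k cv ce -> #|e x| <= k.
Proof.
move=> esym eirr [[[_ ce_edge] _] strong].
have ce_inj : {in enum (e x) &, injective (ce^~ x)}.
  move=> y z; rewrite !mem_enum !unfold_in => exy exz eq_ce; apply/eqP/negPn/negP => yz.
  have yx : y != x by apply: contraTneq exy => ->; rewrite eirr.
  have zx : z != x by apply: contraTneq exz => ->; rewrite eirr.
  have p : is_gpath e y [:: x; z].
    by rewrite /is_gpath /= !inE negb_or yx yz eq_sym zx esym exy exz.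
  have [_ /nonrepetitive_pair] := strong _ _ p.
  by rewrite /edge_seq /= eq_ce; have [<- _] := ce_edge _ _ exz; rewrite eqxx.
rewrite cardE -(size_map (ce^~ x)) -(size_iota 0 k).
apply: uniq_leq_size; first by rewrite (map_inj_in_uniq ce_inj) enum_uniq.
move=> c /mapP[y]; rewrite mem_enum unfold_in => exy ->.
have [_ ce_lt] := ce_edge y x (etrans (esym y x) exy).
by rewrite mem_iota ce_lt.
Qed.

Section Star.
Variable m : nat.

Definition star : rel 'I_m.+1 := fun x y => (x == ord0) != (y == ord0).

Lemma star_sym : symmetric star.
Proof. by move=> x y; rewrite /star eq_sym. Qed.

Lemma star_irr : irreflexive star.
Proof. by move=> x; rewrite /star eqxx. Qed.

Lemma card_star_centre : #|star ord0| = m.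
Proof.
apply: (@etrans _ _ #|predC1 (ord0 : 'I_m.+1)|); last by rewrite cardC1 card_ord.
by apply: eq_card => y; rewrite !inE.
Qed.

Lemma star_middle {x y z : 'I_m.+1} : star x y -> star y z -> x != z ->
  [/\ y = ord0, x != ord0 & z != ord0].
Proof.
rewrite /star; case: (eqVneq y ord0) => [->|_]; case: (eqVneq x ord0) => [->|_] //.
by case: (eqVneq z ord0).
Qed.

Lemma star_gpath (v : 'I_m.+1) (s : seq 'I_m.+1) : is_gpath star v s ->
  [\/ s = [::], exists2 w, s = [:: w] & star v w
    | exists2 u, s = [:: ord0; u] & [/\ v != ord0, u != ord0 & v != u]].
Proof.
case: s => [|w [|u [|t s]]] /andP[U P]; first by constructor.
- by constructor 2; exists w; move: P => /andP[].
- move: U P; rewrite /= !inE !negb_or => /and3P[/andP[_ vu] _ _] /and3P[vw wu _].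
  by have [-> v0 u0] := star_middle vw wu vu; constructor 3; exists u.
exfalso; move: U P; rewrite /= !inE !negb_or.
case/and5P=> /and4P[_ vu _ _] /and3P[_ wt _] _ _ _ /and4P[vw wu ut _].
have [w0 _ _] := star_middle vw wu vu.
by have [_] := star_middle wu ut wt; rewrite w0 eqxx.
Qed.

Definition star_vcol (x : 'I_m.+1) : nat := if x == ord0 then 0 else 1.

Lemma weak_total_thue_star : weak_total_thue star 3 star_vcol (fun _ _ => 2).
Proof.
split; first by split=> [x|//]; rewrite /star_vcol; case: eqP.
move=> v s /star_gpath[-> | [w -> _] | [u -> [v0 u0 _]]];
  apply: squarefree_nonrepetitive; rewrite /squarefree /star_vcol /=.
- by [].
- by case: (v == ord0); case: (w == ord0).
- by rewrite (negbTE v0) (negbTE u0).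
Qed.

Definition star_ecol (x y : 'I_m.+1) : nat := x + y + 2.

Lemma strong_total_thue_star :
  strong_total_thue star (m + 3) star_vcol star_ecol.
Proof.
have vcol_lt x : star_vcol x < 2 by rewrite /star_vcol; case: eqP.
have vcol_ecol x y z : (star_vcol x == star_ecol y z) = false.
  by apply/negbTE; rewrite neq_ltn (leq_trans (vcol_lt x)) // leq_addl.
have ecol_vcol x y z : (star_ecol y z == star_vcol x) = false by rewrite eq_sym.
split; first split.
- split=> [x|x y xy]; first by have := vcol_lt x; lia.
  rewrite /star_ecol (addnC x); split=> //; move: xy; rewrite /star.
  case: (eqVneq x ord0) => [->|_]; case: (eqVneq y ord0) => [->|_] //= _.
    by have := ltn_ord y; lia.
  by have := ltn_ord x; lia.
- move=> v s /star_gpath[-> | [w -> _] | [u -> [v0 u0 _]]];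
    apply: squarefree_nonrepetitive;
    rewrite /squarefree /= ?eqseq_cons ?vcol_ecol ?ecol_vcol //=.
  by rewrite /star_vcol (negbTE v0) (negbTE u0) !andbF.
move=> v s /star_gpath[-> | [w -> vw] | [u -> [v0 u0 vu]]];
  split; apply: squarefree_nonrepetitive;
  rewrite /squarefree /= ?eqseq_cons ?eqxx ?andbT //.
- by move: vw; rewrite /star /star_vcol; case: (v == ord0); case: (w == ord0).
- by rewrite /star_vcol (negbTE v0) (negbTE u0).
- by rewrite /star_ecol /= addn0 add0n eqn_add2r.
Qed.

Lemma pi_Tw_star : pi_Tw star <= 3.
Proof.
by apply: min_nat_le; exists star_vcol, (fun _ _ => 2); exact: weak_total_thue_star.
Qed.

Lemma pi_T_star : m <= pi_T star.
Proof.
apply: min_nat_ge.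
  by exists (m + 3), star_vcol, star_ecol; exact: strong_total_thue_star.
move=> k [cv [ce strong]]; rewrite -card_star_centre.
exact: strong_total_thue_degree_le ord0 star_sym star_irr strong.
Qed.

End Star.

Theorem mainTheorem4 (N : nat) :
  exists (n : nat) (e : rel 'I_n),
    symmetric e /\ irreflexive e /\ N <= pi_T e - pi_Tw e.
Proof.
exists (N + 3).+1, (star (N + 3)).
split; [exact: star_sym | split; first exact: star_irr].
have := pi_Tw_star (N + 3); have := pi_T_star (N + 3); lia.
Qed.
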